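(* Let $q\geq 0$ and $n\geq 0$ be integers. Paul has a winning strategy for the $q$-round pathological liar game with $1$ lie and initial state $(n,0)$ if and only if $$2^q\leq\begin{cases} n(q+1) & \text{if $n$ is even},\\ n(q+1)-(q-1) & \text{if $n$ is odd}.\end{cases}$$
   Context: Pathological liar game with $k=1$ lie: a state is a pair $(x_0,x_1)$ of nonnegative integers. In each of $q$ rounds Paul chooses a legal question $(a_0,a_1)$ with integers $0\leq a_i\leq x_i$, and Carole answers Y or N; the new state is $(a_0,\,a_1+x_0-a_0)$ after Y, or $(x_0-a_0,\,x_1-a_1+a_0)$ after N. Paul wins iff after $q$ rounds $x_0+x_1\geq 1$. *)

From mathcomp Require Import all_boot all_order all_algebra.
Set Implicit Arguments. Unset Strict Implicit. Unset Printing Implicit Defensive.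

(* In each round Paul picks a legal question
   (a0, a1) with a0 <= x0, a1 <= x1; Carole answers Y (new state
   (a0, a1 + x0 - a0)) or N (new state (x0 - a0, x1 - a1 + a0)). *)
Fixpoint paul_wins (q x0 x1 : nat) : Prop :=
  match q with
  | 0 => 1 <= x0 + x1
  | q'.+1 => exists a0 a1 : nat,
      [/\ a0 <= x0, a1 <= x1,
          paul_wins q' a0 (a1 + (x0 - a0))
        & paul_wins q' (x0 - a0) (x1 - a1 + a0)]
  end.

From mathcomp Require Import all_boot all_order all_algebra.
From mathcomp Require Import zify.
Import Order.TTheory GRing.Theory Num.Theory.

Set Implicit Arguments.
Unset Strict Implicit.
Unset Printing Implicit Defensive.

(* Paul wins from (x0, x1) with q questions left iff the Berlekamp weight
   x0 (q + 1) + x1 is at least 2^q and, when x0 is odd, also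
   x0 (q + 1) + 2 x1 >= 2^q + q - 1.  Every question splits the weight of the
   next round exactly between the two answers, which gives the first condition.
   When x0 is odd the answers cannot receive equally many truthful candidates,
   and twice the weight of the answer receiving fewer of them is at most
   x0 (q + 2) + 2 x1 - q, where q + 1 questions were left: this gives the
   second condition.  Conversely Paul splits x0 as evenly as possible;
   each answer then asks for a lower bound on the lie-1 candidates it receives,
   and these bounds fit into x1 by linear arithmetic, using 2^q >= q (q + 1)
   for q >= 5 and a direct check for q <= 4. *)

Definition winning_state q x0 x1 : Prop :=
  2 ^ q <= x0 * q.+1 + x1 /\ (odd x0 -> 2 ^ q + q.-1 <= x0 * q.+1 + 2 * x1).

Definition min_x1 q x0 :=
  maxn (2 ^ q - x0 * q.+1)
       (if odd x0 then uphalf (2 ^ q + q.-1 - x0 * q.+1) else 0).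

Lemma winning_stateE q x0 x1 : winning_state q x0 x1 <-> min_x1 q x0 <= x1.
Proof.
rewrite /winning_state /min_x1; move: (2 ^ q) => P.
by case: (odd x0); split=> [[]|]; lia.
Qed.

Lemma winning_state0 x0 x1 : winning_state 0 x0 x1 <-> 0 < x0 + x1.
Proof. by rewrite /winning_state; split=> [[]|]; lia. Qed.

Lemma winning_state_merge q a b c d :
  winning_state q a (c + b) -> winning_state q b (d + a) ->
  winning_state q.+1 (a + b) (c + d).
Proof.
move=> [weight_a _] [weight_b _]; rewrite /winning_state expnS.
move: (2 ^ q) weight_a weight_b => P weight_a weight_b.
split=> [|odd_ab]; first by lia.
case: (ltngtP a b) odd_ab => [a_lt_b|b_lt_a|->] odd_ab;
  last by rewrite addnn odd_double in odd_ab.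
- have : a * q + q <= b * q by rewrite -mulSnr leq_mul2r a_lt_b orbT.
  lia.
- have : b * q + q <= a * q by rewrite -mulSnr leq_mul2r b_lt_a orbT.
  lia.
Qed.

Lemma split_between n1 n2 a b x :
  n1 <= b + x -> n2 <= a + x -> n1 + n2 <= a + b + x ->
  exists2 y, y <= x & n1 <= y + b /\ n2 <= x - y + a.
Proof. by move=> *; exists (n1 - b); lia. Qed.

Lemma mul_succ_le_exp2 q : 5 <= q -> q * q.+1 <= 2 ^ q.
Proof.
elim: q => // q IH; rewrite leq_eqVlt => /predU1P[<- // | q_ge5].
by rewrite expnS; move: (2 ^ q) (IH q_ge5) => P; nia.
Qed.

Lemma min_x1_halves_large q h c x1 : 5 <= q -> c <= 1 ->
  winning_state q.+1 (h + (h + c)) x1 ->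
  [/\ min_x1 q h <= h + c + x1, min_x1 q (h + c) <= h + x1
    & min_x1 q h + min_x1 q (h + c) <= h + (h + c) + x1].
Proof.
move=> q_ge5 c_le1 []; have := mul_succ_le_exp2 q_ge5.
(* lia treats [h * q] and [q * q] as atoms: [far], [next] and [above] are all
   it needs to know about them. *)
have far : h.+1 < q -> h * q + 2 * q <= q * q.
  by move=> lt_hq; rewrite -mulnDl leq_mul2r addn2 lt_hq orbT.
have next : h.+1 = q -> h * q + q = q * q by move=> <-; rewrite mulSnr.
have above : q <= h -> q * q <= h * q by move=> le_qh; rewrite leq_mul2r le_qh orbT.
rewrite /min_x1 expnS; move: (2 ^ q) => P.
case: c c_le1 => [|[|//]] _; rewrite ?addn0 ?addn1;
  case odd_h: (odd h); rewrite /= ?odd_h /= => *; split; lia.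
Qed.

Lemma min_x1_halves q h c x1 : c <= 1 ->
  winning_state q.+1 (h + (h + c)) x1 ->
  [/\ min_x1 q h <= h + c + x1, min_x1 q (h + c) <= h + x1
    & min_x1 q h + min_x1 q (h + c) <= h + (h + c) + x1].
Proof.
case: (leqP 5 q) => [q_ge5|q_lt5 c_le1]; first exact: min_x1_halves_large.
rewrite /min_x1; case: q q_lt5 => [|[|[|[|[|//]]]]] _.
all: case: c c_le1 => [|[|//]] _; rewrite ?addn0 ?addn1.
all: case odd_h: (odd h); rewrite /= ?odd_h /= => -[] *; split; lia.
Qed.

Lemma winning_state_split q x0 x1 : winning_state q.+1 x0 x1 ->
  exists a0 a1, [/\ a0 <= x0, a1 <= x1,
    winning_state q a0 (a1 + (x0 - a0)) & winning_state q (x0 - a0) (x1 - a1 + a0)].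
Proof.
set h := x0./2; set c := odd x0.
have x0E : x0 = h + (h + c) by rewrite addnA addnn addnC odd_double_half.
rewrite [in winning_state _ x0]x0E => /(min_x1_halves (leq_b1 c))[fit_a fit_b fit_sum].
have [a1 le_a1 [yes no]] := split_between fit_a fit_b fit_sum.
exists h, a1; have -> : x0 - h = h + c by rewrite {1}x0E addKn.
by split=> //; [rewrite {1}x0E leq_addr | apply/winning_stateE ..].
Qed.

Lemma paul_winsE q x0 x1 : paul_wins q x0 x1 <-> winning_state q x0 x1.
Proof.
elim: q x0 x1 => [|q IH] x0 x1 /=; first by rewrite winning_state0.
split=> [[a0 [a1 [le_a0 le_a1 /IH Y /IH N]]] | ].
  rewrite -(subnKC le_a0) -(subnKC le_a1).
  by apply: winning_state_merge; rewrite ?subnKC ?addKn.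
move=> /winning_state_split[a0 [a1 [le_a0 le_a1 Y N]]].
by exists a0, a1; split; rewrite ?IH.
Qed.

Theorem theorem9 (q n : nat) :
  paul_wins q n 0 <->
  ((2 ^ q)%:Z <= (if odd n then (n * q.+1)%:Z - (q%:Z - 1)
                  else (n * q.+1)%:Z))%R.
Proof.
rewrite paul_winsE /winning_state muln0 addn0.
case: q => [|q]; [rewrite expn0 | move: (2 ^ _) => P].
all: by case odd_n: (odd n); split=> [[]|]; lia.
Qed.
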